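(* Let $A,B \in \mathcal{C}_1^{m \times n}$, $C \in \mathcal{C}_1^{n \times p}$ and $\lambda \in \mathcal{C}$ be given. Then (a) $A=B \iff \Phi_1(A) = \Phi_1(B)$. (b) $\Phi_1(A + B) = \Phi_1(A) + \Phi_1(B)$. (c) $\Phi_1(AC) = \Phi_1(A)\Phi_1(C)$, $\Phi_1(\lambda A) = \lambda \Phi_1(A)$, $\Phi_1(I_m) = I_{2m}$. (d) $\Phi_1(\overline{A}) = \begin{bmatrix} 0 & I_m \\ I_m & 0 \end{bmatrix} \Phi_1(A) \begin{bmatrix} 0 & I_n \\ I_n & 0 \end{bmatrix}$. (e) Let $A = A_0 + A_1 e$ and denote $A^{\#} = A_0^* - A_1^* e$, where $A_0^*$ and $A_1^*$ are the conjugate transposes of the complex matrices $A_0$ and $A_1$. Then $\Phi_1(A^{\#}) = \Phi_1(A)^*$, the conjugate transpose of the complex matrix $\Phi_1(A)$. (f) $A = \frac{1}{4}[(1 - ie)I_m,\ (i - e)I_m]\, \Phi_1(A)\, [(1 - ie)I_n,\ (e - i)I_n]^T$. (g) (for $m=n$) $A$ is invertible $\iff \Phi_1(A)$ is invertible, in which case $\Phi_1(A^{-1}) = \Phi_1(A)^{-1}$. (h) (for $m=n$) $p_A(A) = 0$, where $p_A(x) = \det[x I_{2m} - \Phi_1(A)]$.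
   Context: $\mathcal{C}$ denotes the complex numbers and $\mathcal{C}_1 = \mathcal{C}\{e\}$ is the complex Clifford algebra on one generator $e$ with $e^2 = -1$; every element is $a_0 + a_1 e$ with $a_0,a_1\in\mathcal{C}$, and $e$ commutes with complex scalars. $\mathcal{C}_1^{m\times n}$ denotes $m\times n$ matrices over $\mathcal{C}_1$; every $A \in \mathcal{C}_1^{m \times n}$ is written uniquely as $A = A_0 + A_1 e$ with $A_0, A_1 \in \mathcal{C}^{m \times n}$, and its conjugate is $\overline{A} = A_0 - A_1 e$. The complex matrix representation of $A$ is defined by $\Phi_1(A) = \begin{bmatrix} A_0 + A_1 i & 0 \\ 0 & A_0 - A_1 i \end{bmatrix}$, where $i$ is the complex imaginary unit. $I_m$ denotes the $m\times m$ identity matrix. These properties come from the universal factorization equality $J_{2m}\,\mathrm{diag}(A,\overline{A})\,J_{2n}^{-1} = \Phi_1(A)$ with $J_{2m} = \frac12\begin{bmatrix}(1-ie)I_m & -(i-e)I_m\\ -(i-e)I_m & (1-ie)I_m\end{bmatrix}$, $J_{2n}^{-1} = \frac12\begin{bmatrix}(1-ie)I_n & (i-e)I_n\\ (i-e)I_n & (1-ie)I_n\end{bmatrix}$. *)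

From HB Require Import structures.
From mathcomp Require Import all_boot all_order all_algebra.
From mathcomp Require Import complex.
From mathcomp Require Import reals.
From mathcomp Require Import ring.
Set Implicit Arguments. Unset Strict Implicit. Unset Printing Implicit Defensive.
Import Order.TTheory GRing.Theory Num.Theory.
Local Open Scope ring_scope.

(* The Clifford algebra on one generator e (e^2 = -1) over a commutative     *)
(* ring K: elements a0 + a1 e, e commuting with scalars.                     *)
Section Clifford1.
Variable K : comNzRingType.

Variant cliff1 := mkC1 of K & K.

Definition c0 (x : cliff1) := let: mkC1 a _ := x in a.
Definition c1 (x : cliff1) := let: mkC1 _ b := x in b.

Definition cliff1_to (x : cliff1) : K * K := (c0 x, c1 x).
Definition cliff1_of (p : K * K) : cliff1 := mkC1 p.1 p.2.
Lemma cliff1_toK : cancel cliff1_to cliff1_of. Proof. by case. Qed.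

HB.instance Definition _ := Equality.copy cliff1 (can_type cliff1_toK).
HB.instance Definition _ := Choice.copy cliff1 (can_type cliff1_toK).

Definition add1 (x y : cliff1) := mkC1 (c0 x + c0 y) (c1 x + c1 y).
Definition opp1 (x : cliff1) := mkC1 (- c0 x) (- c1 x).
Definition zero1 := mkC1 0 0.
Definition mul1 (x y : cliff1) :=
  mkC1 (c0 x * c0 y - c1 x * c1 y) (c0 x * c1 y + c1 x * c0 y).
Definition one1 := mkC1 1 0.

Lemma add1A : associative add1.
Proof. by case=> ? ? [? ?] [? ?]; rewrite /add1 /=; congr mkC1; ring. Qed.
Lemma add1C : commutative add1.
Proof. by case=> ? ? [? ?]; rewrite /add1 /=; congr mkC1; ring. Qed.
Lemma add01 : left_id zero1 add1.
Proof. by case=> ? ?; rewrite /add1 /=; congr mkC1; ring. Qed.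
Lemma addN1 : left_inverse zero1 opp1 add1.
Proof. by case=> ? ?; rewrite /add1 /=; congr mkC1; ring. Qed.

HB.instance Definition _ := GRing.isZmodule.Build cliff1 add1A add1C add01 addN1.

Lemma mul1A : associative mul1.
Proof. by case=> a b [c d] [f g]; rewrite /mul1 /=; congr mkC1; ring. Qed.
Lemma mul1C : commutative mul1.
Proof. by case=> a b [c d]; rewrite /mul1 /=; congr mkC1; ring. Qed.
Lemma mul11 : left_id one1 mul1.
Proof. by case=> a b; rewrite /mul1 /=; congr mkC1; ring. Qed.
Lemma mul1Dl : left_distributive mul1 add1.
Proof. by case=> a b [c d] [f g]; rewrite /mul1 /add1 /=; congr mkC1; ring. Qed.
Lemma one1_neq0 : one1 != zero1.
Proof. by apply/eqP => -[] /eqP; rewrite oner_eq0. Qed.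

HB.instance Definition _ :=
  GRing.Zmodule_isComNzRing.Build cliff1 mul1A mul1C mul11 mul1Dl one1_neq0.

End Clifford1.

Section Defs.
Variable R : realType.
Local Notation C := (R[i]).

Definition C1 := cliff1 C.

Definition inC1 (a : C) : C1 := mkC1 a 0.
Definition e1 : C1 := mkC1 0 1.
Definition i1 : C1 := inC1 'i%C.

Definition mx0 m n (A : 'M[C1]_(m, n)) : 'M[C]_(m, n) := map_mx (@c0 C) A.
Definition mx1 m n (A : 'M[C1]_(m, n)) : 'M[C]_(m, n) := map_mx (@c1 C) A.
Definition mkmx m n (X Y : 'M[C]_(m, n)) : 'M[C1]_(m, n) :=
  \matrix_(i, j) mkC1 (X i j) (Y i j).
Definition inC1mx m n (X : 'M[C]_(m, n)) : 'M[C1]_(m, n) := map_mx inC1 X.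

Definition barmx1 m n (A : 'M[C1]_(m, n)) : 'M[C1]_(m, n) :=
  mkmx (mx0 A) (- mx1 A).

Definition ctmx m n (X : 'M[C]_(m, n)) : 'M[C]_(n, m) :=
  map_mx (fun z => z^*%C) X^T.

Definition sharpmx m n (A : 'M[C1]_(m, n)) : 'M[C1]_(n, m) :=
  mkmx (ctmx (mx0 A)) (- ctmx (mx1 A)).

Definition Phi1 m n (A : 'M[C1]_(m, n)) : 'M[C]_(m + m, n + n) :=
  block_mx (mx0 A + 'i%C *: mx1 A) 0 0 (mx0 A - 'i%C *: mx1 A).

(* invertibility of a square matrix over the (non-field) ring C_1 *)
Definition invertible1 m (A : 'M[C1]_m) : Prop :=
  exists B : 'M[C1]_m, A *m B = 1%:M /\ B *m A = 1%:M.

Definition peval1 m (p : {poly C}) (A : 'M[C1]_m) : 'M[C1]_m :=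
  \sum_(k < size p) (inC1 p`_k) *: (A ^+ k).

End Defs.

From HB Require Import structures.
From mathcomp Require Import all_boot all_order all_algebra.
From mathcomp Require Import complex reals ring.
Set Implicit Arguments.
Unset Strict Implicit.
Unset Printing Implicit Defensive.
Import Order.TTheory GRing.Theory Num.Theory.
Local Open Scope ring_scope.

(* Whenever [j ^+ 2 = -1] in a commutative ring K, [x |-> c0 x + j c1 x] is a
   ring morphism from K{e} to K; for a field with [2 != 0] the two morphisms
   attached to [j] and [-j] together form a ring isomorphism K{e} ~ K * K.
   Phi_1 is exactly the entrywise application of this isomorphism for
   [j = 'i], laid out block-diagonally, so (a)-(c) and (g) are the matrix
   form of "isomorphism of rings", (d) and (e) follow by computing how bar and
   conjugate transposition act on the two factors, (f) is the decomposition of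
   [x] along the two idempotents [(1 -+ ie)/2], and (h) is Cayley-Hamilton
   for [Phi_1(A)] pulled back along the injective morphism [Phi_1]. *)

Section CliffordEval.
Variables (K : comNzRingType) (j : K).

Definition cliff1_eval (x : cliff1 K) : K := c0 x + j * c1 x.

Lemma cliff1_eval_scalar a : cliff1_eval (mkC1 a 0) = a.
Proof. by rewrite /cliff1_eval /= mulr0 addr0. Qed.

Lemma cliff1_eval_is_zmod_morphism : zmod_morphism cliff1_eval.
Proof. by case=> a b [c d]; rewrite /cliff1_eval /=; ring. Qed.

HB.instance Definition _ := GRing.isZmodMorphism.Build (cliff1 K) K cliff1_eval
  cliff1_eval_is_zmod_morphism.

Section SquareRootOfMinusOne.
Hypothesis sqr_j : j ^+ 2 = -1.

Lemma cliff1_eval_is_monoid_morphism : monoid_morphism cliff1_eval.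
Proof.
split=> [|[a b] [c d]]; rewrite /cliff1_eval /=; first by rewrite mulr0 addr0.
have -> : a * c - b * d = a * c + j ^+ 2 * b * d by rewrite sqr_j; ring.
ring.
Qed.

HB.instance Definition _ := GRing.isMonoidMorphism.Build (cliff1 K) K
  cliff1_eval cliff1_eval_is_monoid_morphism.

Lemma map_cliff1_evalM m n p (A : 'M_(m, n)) (B : 'M_(n, p)) :
  map_mx cliff1_eval (A *m B) = map_mx cliff1_eval A *m map_mx cliff1_eval B.
Proof. exact: map_mxM. Qed.

Lemma map_cliff1_eval1 n : map_mx cliff1_eval (1%:M : 'M_n) = 1%:M.
Proof. exact: map_mx1. Qed.

Lemma map_cliff1_evalZ m n a (A : 'M_(m, n)) :
  map_mx cliff1_eval (mkC1 a 0 *: A) = a *: map_mx cliff1_eval A.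
Proof. by rewrite map_mxZ; congr (_ *: _); exact: cliff1_eval_scalar. Qed.

End SquareRootOfMinusOne.
End CliffordEval.

Section CliffordInterp.
Variables (K : fieldType) (j : K).
Hypotheses (sqr_j : j ^+ 2 = -1) (two_neq0 : 2%:R != 0 :> K).

Lemma sqrt_neg1_neq0 : j != 0.
Proof.
by apply: contra_eq_neq sqr_j => ->; rewrite expr0n eq_sym oppr_eq0 oner_eq0.
Qed.

Definition cliff1_interp (u v : K) : cliff1 K :=
  mkC1 ((u + v) / 2%:R) ((u - v) / (2%:R * j)).

Lemma cliff1_eval_interp u v : cliff1_eval j (cliff1_interp u v) = u.
Proof. by rewrite /cliff1_eval /=; field; rewrite sqrt_neg1_neq0 two_neq0. Qed.

Lemma cliff1_evalN_interp u v : cliff1_eval (- j) (cliff1_interp u v) = v.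
Proof. by rewrite /cliff1_eval /=; field; rewrite sqrt_neg1_neq0 two_neq0. Qed.

Lemma cliff1_interp_eval x :
  cliff1_interp (cliff1_eval j x) (cliff1_eval (- j) x) = x.
Proof.
by case: x => a b; rewrite /cliff1_interp /cliff1_eval /=;
  congr mkC1; field; rewrite ?sqrt_neg1_neq0 ?two_neq0.
Qed.

Lemma map_cliff1_eval_interp m n (X Y : 'M_(m, n)) :
  map_mx (cliff1_eval j) (map2_mx cliff1_interp X Y) = X.
Proof. by apply/matrixP => i k; rewrite !mxE cliff1_eval_interp. Qed.

Lemma map_cliff1_evalN_interp m n (X Y : 'M_(m, n)) :
  map_mx (cliff1_eval (- j)) (map2_mx cliff1_interp X Y) = Y.
Proof. by apply/matrixP => i k; rewrite !mxE cliff1_evalN_interp. Qed.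

Lemma map2_cliff1_interp_eval m n (A : 'M_(m, n)) :
  map2_mx cliff1_interp (map_mx (cliff1_eval j) A)
                        (map_mx (cliff1_eval (- j)) A) = A.
Proof. by apply/matrixP => i k; rewrite !mxE cliff1_interp_eval. Qed.

End CliffordInterp.

Lemma horner_mx_coef (K : comNzRingType) n (A : 'M[K]_n.+1) (p : {poly K}) :
  horner_mx A p = \sum_(k < size p) p`_k *: A ^+ k.
Proof.
rewrite -{1}(coefK p) poly_def rmorph_sum /=; apply: eq_bigr => k _.
by rewrite linearZ /= rmorphXn /= horner_mx_X.
Qed.

Lemma swap_block_diag (K : pzRingType) m n (P Q : 'M[K]_(m, n)) :
  block_mx 0 1%:M 1%:M 0 *m block_mx P 0 0 Q *m block_mx 0 1%:M 1%:M 0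
  = block_mx Q 0 0 P.
Proof.
by rewrite !mulmx_block !(mulmx0, mul0mx, mulmx1, mul1mx, addr0, add0r).
Qed.

Lemma mul_row_block_diag_col (K : comPzRingType) m n (a b c d : K)
    (P Q : 'M[K]_(m, n)) :
  row_mx a%:M b%:M *m block_mx P 0 0 Q *m (row_mx c%:M d%:M)^T
  = (a * c) *: P + (b * d) *: Q.
Proof.
rewrite tr_row_mx !tr_scalar_mx mul_row_block !(mulmx0, addr0, add0r).
rewrite mul_row_col !mul_scalar_mx !mul_mx_scalar !scalerA.
by rewrite [c * _]mulrC [d * _]mulrC.
Qed.

Lemma mul_row_block_diag_colE (K : comPzRingType) m n (a b c d w : K)
    (P Q : 'M[K]_(m, n)) i j :
  (w *: (row_mx a%:M b%:M *m block_mx P 0 0 Q *m (row_mx c%:M d%:M)^T)) i j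
  = w * (a * c * P i j + b * d * Q i j).
Proof. by rewrite mul_row_block_diag_col !mxE. Qed.

Section ComplexRepresentation.
Variable R : realType.
Local Notation C := R[i].
Local Notation C1 := (C1 R).
Implicit Types m n p : nat.

Lemma sqrNi : (- 'i%C) ^+ 2 = -1 :> C.
Proof. by rewrite sqrrN sqr_i. Qed.

Lemma two_neq0 : 2%:R != 0 :> C.
Proof. by rewrite pnatr_eq0. Qed.

Lemma conjc_i : ('i%C)^*%C = - 'i%C :> C.
Proof. by apply/eqP; rewrite eq_complex /= oppr0 !eqxx. Qed.

Lemma inC1_is_zmod_morphism : zmod_morphism (@inC1 R).
Proof. by move=> a b; rewrite /inC1; congr mkC1; rewrite subrr. Qed.

HB.instance Definition _ :=
  GRing.isZmodMorphism.Build C C1 (@inC1 R) inC1_is_zmod_morphism.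

Lemma inC1_is_monoid_morphism : monoid_morphism (@inC1 R).
Proof.
by split=> // a b; rewrite /inC1; congr mkC1; rewrite /= !(mulr0, mul0r) ?subr0 ?addr0.
Qed.

HB.instance Definition _ :=
  GRing.isMonoidMorphism.Build C C1 (@inC1 R) inC1_is_monoid_morphism.

Lemma Phi1E m n (A : 'M[C1]_(m, n)) :
  Phi1 A = block_mx (map_mx (cliff1_eval 'i%C) A) 0 0
                    (map_mx (cliff1_eval (- 'i%C)) A).
Proof.
by congr block_mx; apply/matrixP => i k; rewrite !mxE /cliff1_eval // mulNr.
Qed.

Lemma Phi1_inj m n : injective (@Phi1 R m n).
Proof.
move=> A B; rewrite !Phi1E => /eq_block_mx[eqA _ _ eqAN].
by rewrite -[LHS](map2_cliff1_interp_eval (sqr_i R) two_neq0)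
  -[RHS](map2_cliff1_interp_eval (sqr_i R) two_neq0) eqA eqAN.
Qed.

Lemma Phi1_interp m n (X Y : 'M[C]_(m, n)) :
  Phi1 (map2_mx (cliff1_interp 'i%C) X Y) = block_mx X 0 0 Y.
Proof.
by rewrite Phi1E (map_cliff1_eval_interp (sqr_i R) two_neq0)
  (map_cliff1_evalN_interp (sqr_i R) two_neq0).
Qed.

Lemma Phi1D m n (A B : 'M[C1]_(m, n)) : Phi1 (A + B) = Phi1 A + Phi1 B.
Proof. by rewrite !Phi1E add_block_mx !map_mxD addr0. Qed.

Lemma Phi1_0 m n : Phi1 (0 : 'M[C1]_(m, n)) = 0.
Proof. by rewrite Phi1E !map_mx0 block_mx0. Qed.

Lemma Phi1M m n p (A : 'M[C1]_(m, n)) (B : 'M[C1]_(n, p)) :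
  Phi1 (A *m B) = Phi1 A *m Phi1 B.
Proof.
rewrite !Phi1E mulmx_block !(mulmx0, mul0mx, addr0, add0r).
by rewrite (map_cliff1_evalM (sqr_i R)) (map_cliff1_evalM sqrNi).
Qed.

Lemma Phi1Z m n lambda (A : 'M[C1]_(m, n)) :
  Phi1 (inC1 lambda *: A) = lambda *: Phi1 A.
Proof.
rewrite !Phi1E scale_block_mx !scaler0.
by rewrite (map_cliff1_evalZ (sqr_i R)) (map_cliff1_evalZ sqrNi).
Qed.

Lemma Phi1_1 m : Phi1 (1%:M : 'M[C1]_m) = 1%:M.
Proof.
by rewrite Phi1E (map_cliff1_eval1 (sqr_i R)) (map_cliff1_eval1 sqrNi)
  -scalar_mx_block.
Qed.

Lemma Phi1_sum m n I (r : seq I) (P : pred I) (F : I -> 'M[C1]_(m, n)) :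
  Phi1 (\sum_(i <- r | P i) F i) = \sum_(i <- r | P i) Phi1 (F i).
Proof. exact: (big_morph _ (@Phi1D m n) (@Phi1_0 m n)). Qed.

Lemma Phi1X n (D : 'M[C1]_n) k : Phi1 (D ^+ k) = Phi1 D ^+ k.
Proof.
elim: k => [|k IHk]; first exact: Phi1_1.
by rewrite !exprS -!mulmxE Phi1M IHk.
Qed.

Lemma Phi1_bar m n (A : 'M[C1]_(m, n)) :
  Phi1 (barmx1 A) = block_mx 0 1%:M 1%:M 0 *m Phi1 A *m block_mx 0 1%:M 1%:M 0.
Proof.
rewrite !Phi1E swap_block_diag.
by congr block_mx; apply/matrixP => i k;
  rewrite !mxE /cliff1_eval /= ?mulrN ?mulNr ?opprK.
Qed.

Lemma Phi1_sharp m n (A : 'M[C1]_(m, n)) : Phi1 (sharpmx A) = ctmx (Phi1 A).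
Proof.
rewrite !Phi1E /ctmx tr_block_mx map_block_mx !trmx0 !map_mx0.
congr block_mx; apply/matrixP => i k; rewrite !mxE /cliff1_eval /=.
  rewrite rmorphD rmorphM mulrN -mulNr; congr (_ + _ * _).
  exact/esym/conjc_i.
rewrite rmorphD rmorphM rmorphN mulrNN; congr (_ + _ * _).
by apply: oppr_inj; rewrite opprK; exact/esym/conjc_i.
Qed.

Lemma cliff1_peirce (x : C1) :
  (1 - i1 R * e1 R) * (1 - i1 R * e1 R) * inC1 (cliff1_eval 'i%C x)
    + (i1 R - e1 R) * (e1 R - i1 R) * inC1 (cliff1_eval (- 'i%C) x)
  = inC1 4%:R * x.
Proof.
case: x => -[a b] [c d]; apply: (can_inj (@cliff1_toK _)).
by rewrite /cliff1_to /=; congr pair; apply/eqP; rewrite eq_complex /=;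
  apply/andP; split; apply/eqP; ring.
Qed.

Lemma Phi1_reconstruct m n (A : 'M[C1]_(m, n)) :
  A = inC1 4%:R^-1 *:
        (row_mx (1 - i1 R * e1 R)%:M (i1 R - e1 R)%:M *m inC1mx (Phi1 A)
         *m (row_mx (1 - i1 R * e1 R)%:M (e1 R - i1 R)%:M)^T).
Proof.
apply/matrixP => i k; rewrite Phi1E /inC1mx map_block_mx !map_mx0.
rewrite mul_row_block_diag_colE !mxE cliff1_peirce mulrA -rmorphM.
by rewrite mulVf ?pnatr_eq0 // rmorph1 mul1r.
Qed.

Lemma Phi1_mul_eq1 n (D D' : 'M[C1]_n) :
  D *m D' = 1%:M -> Phi1 D *m Phi1 D' = 1%:M.
Proof. by move=> DD'; rewrite -Phi1M DD' Phi1_1. Qed.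

Lemma Phi1_invmx n (D D' : 'M[C1]_n) :
  D *m D' = 1%:M -> Phi1 D' = invmx (Phi1 D).
Proof.
move=> /Phi1_mul_eq1 DD'; have [uD _] := mulmx1_unit DD'.
by rewrite -[LHS](mulKmx uD) DD' mulmx1.
Qed.

Lemma invertible1_Phi1 n (D : 'M[C1]_n) : invertible1 D <-> Phi1 D \in unitmx.
Proof.
split=> [[D' [/Phi1_mul_eq1 DD' _]] | uD]; first exact: (mulmx1_unit DD').1.
move: (uD); rewrite Phi1E block_diag_mx_unit => /andP[uP uN].
set D' := map2_mx (cliff1_interp 'i%C) (invmx (map_mx (cliff1_eval 'i%C) D))
  (invmx (map_mx (cliff1_eval (- 'i%C)) D)).
have PhiD' : Phi1 D' = invmx (Phi1 D).
  by rewrite Phi1_interp [Phi1 D]Phi1E invmx_block_diag ?block_diag_mx_unit ?uP.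
exists D'; split; apply: Phi1_inj; rewrite Phi1M Phi1_1 PhiD';
  [exact: mulmxV | exact: mulVmx].
Qed.

Lemma Phi1_peval1 n (D : 'M[C1]_n.+1) (p : {poly C}) :
  Phi1 (peval1 p D) = horner_mx (Phi1 D) p.
Proof.
rewrite horner_mx_coef /peval1 Phi1_sum; apply: eq_bigr => k _.
by rewrite Phi1Z Phi1X.
Qed.

Lemma peval1_char_poly_Phi1 n (D : 'M[C1]_n) :
  peval1 (char_poly (Phi1 D)) D = 0.
Proof.
case: n D => [|n] D; first by apply/matrixP => -[].
by apply: Phi1_inj; rewrite Phi1_peval1 Cayley_Hamilton Phi1_0.
Qed.

End ComplexRepresentation.

Theorem corollary7 (R : realType) (m n p : nat)
  (A B : 'M[C1 R]_(m, n)) (Cm : 'M[C1 R]_(n, p)) (lambda : R[i]) :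
  (* (a) *)
  (A = B <-> Phi1 A = Phi1 B) /\
  (* (b) *)
  Phi1 (A + B) = Phi1 A + Phi1 B /\
  (* (c) *)
  (Phi1 (A *m Cm) = Phi1 A *m Phi1 Cm /\
   Phi1 (inC1 lambda *: A) = lambda *: Phi1 A /\
   Phi1 (1%:M : 'M[C1 R]_m) = 1%:M) /\
  (* (d) *)
  Phi1 (barmx1 A) =
    block_mx 0 1%:M 1%:M 0 *m Phi1 A *m block_mx 0 1%:M 1%:M 0 /\
  (* (e) *)
  Phi1 (sharpmx A) = ctmx (Phi1 A) /\
  (* (f) *)
  A = (inC1 (4%:R^-1) *: ((row_mx ((1 - i1 R * e1 R)%:M) ((i1 R - e1 R)%:M) : 'M[C1 R]_(m, m + m))

         *m inC1mx (Phi1 A)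
         *m (row_mx ((1 - i1 R * e1 R)%:M) ((e1 R - i1 R)%:M) : 'M[C1 R]_(n, n + n))^T) : 'M[C1 R]_(m, n)) /\
  (* (g), case m = n *)
  (forall D : 'M[C1 R]_m,
     (invertible1 D <-> Phi1 D \in unitmx) /\
     (forall D' : 'M[C1 R]_m, D *m D' = 1%:M /\ D' *m D = 1%:M ->
        Phi1 D' = invmx (Phi1 D))) /\
  (* (h), case m = n *)
  (forall D : 'M[C1 R]_m, peval1 (char_poly (Phi1 D)) D = 0).
Proof.
split; first by split=> [->|/Phi1_inj].
split; first exact: Phi1D.
split; first by split; [exact: Phi1M | split; [exact: Phi1Z | exact: Phi1_1]].
split; first exact: Phi1_bar.
split; first exact: Phi1_sharp.
split; first exact: Phi1_reconstruct.
split; last exact: peval1_char_poly_Phi1.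
by move=> D; split=> [|D' [DD' _]]; [exact: invertible1_Phi1 | exact: Phi1_invmx].
Qed.
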